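(* Let $G$ be a bridgeless cubic graph and let $J_1,J_2,J_3$ be three joins of $G$ such that the weak core of $G$ with respect to $J_1,J_2,J_3$ is a weak $k$-core, i.e. $k=|E_0|+\frac{3}{2}\sum_{i=1}^3 n(J_i)$. Then $$\sum_{i=1}^3|\overline{J_i}|_{odd}\leq 2k.$$
   Context: A join of a graph $H$ is a set $J\subseteq E(H)$ such that every vertex has degree of the same parity in $H$ and in the spanning subgraph $(V(H),J)$. In a cubic graph every vertex has degree $1$ or $3$ in a join $J$; a vertex of degree $3$ in $J$ is a $J$-vertex and $n(J)$ is the number of $J$-vertices. Given three joins $J_1,J_2,J_3$, $E_i$ ($i=0,\dots,3$) is the set of edges lying in precisely $i$ of them; the weak core with respect to them is $G[E_0\cup E_2\cup E_3]$, and it is called a weak $l$-core (more precisely a $k'$-weak $l$-core, where $k'$ is the number of $J_i$ that are not 1-factors) with $l=|E_0|+\frac{3}{2}\sum_{i=1}^3 n(J_i)$. $\overline{J}$ denotes the complement of $J$, i.e. the spanning subgraph $(V(G),E(G)\setminus J)$, and $|H|_{odd}$ denotes the number of components of $H$ with an odd number of vertices. *)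

(* Finite multigraphs: vertex type V, edge type E, each edge
   e has two ends (src e) and (tgt e).  Parallel edges allowed; a loop
   contributes 2 to the degree of its vertex. *)
From mathcomp Require Import all_boot.
Set Implicit Arguments. Unset Strict Implicit. Unset Printing Implicit Defensive.

Section Graphs.
Variables (V E : finType) (src tgt : E -> V).

Definition deg (F : {set E}) (v : V) : nat :=
  #|[set e in F | src e == v]| + #|[set e in F | tgt e == v]|.

Definition cubic : Prop := forall v, deg [set: E] v = 3.

Definition adj (F : {set E}) : rel V :=
  fun x y => [exists e in F, ((src e == x) && (tgt e == y)) ||
                             ((src e == y) && (tgt e == x))].

Definition bridgeless : Prop :=
  forall e : E, connect (adj ([set: E] :\ e)) (src e) (tgt e).

Definition is_join (J : {set E}) : Prop :=
  forall v, odd (deg J v) = odd (deg [set: E] v).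

Definition nJ (J : {set E}) : nat := #|[set v | deg J v == 3]|.

Definition compl (J : {set E}) : {set E} := ~: J.

Definition components (F : {set E}) : {set {set V}} :=
  [set [set y | connect (adj F) x y] | x : V].

Definition odd_comps (F : {set E}) : nat :=
  #|[set C in components F | odd #|C|]|.

Definition Ei (J1 J2 J3 : {set E}) (i : nat) : {set E} :=
  [set e | (e \in J1) + (e \in J2) + (e \in J3) == i].

End Graphs.

From mathcomp Require Import all_boot zify.
Set Implicit Arguments. Unset Strict Implicit. Unset Printing Implicit Defensive.

(* Split the odd components of each complement ~J_i into those containing a
   J-vertex of some J_j (at most n(J_1) + n(J_2) + n(J_3) of them) and those
   all of whose vertices have degree 1 in the three joins.  In a component K
   of the second kind, parity forces an odd number of edges of J_i :&: J_j to
   leave K for each j <> i; counting degrees inside K then shows that K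
   contains at least one E_0-edge, and that if it contains only one, this
   edge is "tight" for J_i.  An edge is tight for at most one i, so weighting
   tight E_0-edges by 2 and the others by 1 gives every such K weight at
   least 2 while each E_0-edge distributes at most 4 over the three
   complements. *)

Section JoinComplements.
Variables (V E : finType) (src tgt : E -> V).

Local Notation deg := (deg src tgt).
Local Notation adj := (adj src tgt).
Local Notation components := (components src tgt).

Definition ends_at (e : E) (v : V) : nat := (src e == v) + (tgt e == v).

Lemma card_set_cond_sum (F : {set E}) (P : pred E) :
  #|[set e in F | P e]| = \sum_e (e \in F) * P e.
Proof.
rewrite -sum1_card big_mkcond /=; apply: eq_bigr => e _; rewrite inE.
by case: (e \in F); case: (P e).
Qed.

Lemma deg_sumE (F : {set E}) v : deg F v = \sum_e (e \in F) * ends_at e v.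
Proof.
rewrite /deg !card_set_cond_sum -big_split.
by apply: eq_bigr => e _; rewrite /ends_at mulnDr.
Qed.

Lemma deg_add (F G H : {set E}) v :
  (forall e, (e \in F) + (e \in G) = (e \in H)) -> deg F v + deg G v = deg H v.
Proof.
move=> FGH; rewrite !deg_sumE -big_split.
by apply: eq_bigr => e _; rewrite -FGH mulnDl.
Qed.

Lemma deg_subset (F G : {set E}) v : F \subset G -> deg F v <= deg G v.
Proof.
move=> /subsetP sFG; rewrite !deg_sumE; apply: leq_sum => e _.
by case Fe: (e \in F); rewrite // sFG.
Qed.

Lemma sum_deg_set (K : {set V}) (F : {set E}) :
  \sum_(v in K) deg F v = \sum_e (e \in F) * ((src e \in K) + (tgt e \in K)).
Proof.
under eq_bigr => v _ do rewrite deg_sumE.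
rewrite exchange_big /=; apply: eq_bigr => e _.
have sum_eq x : \sum_(v in K) (x == v) = (x \in K).
  case: (boolP (x \in K)) => xK; last first.
    by rewrite big1 // => v vK; case: eqP => // xv; rewrite xv vK in xK.
  rewrite (bigD1 x) //= eqxx big1 // => v /andP[_ vx].
  by rewrite eq_sym (negbTE vx).
by rewrite -big_distrr /= big_split /= !sum_eq.
Qed.

Lemma leq_sum_pair (I : finType) (S : {set I}) (f : I -> nat) i j :
  i \in S -> j \in S -> i != j -> f i + f j <= \sum_(k in S) f k.
Proof.
move=> Si Sj nij; rewrite (bigD1 i) //= leq_add2l (bigD1 j) /= ?leq_addr //.
by rewrite Sj eq_sym nij.
Qed.

Lemma adj_sym (F : {set E}) : symmetric (adj F).
Proof.
by move=> x y; apply/existsP/existsP => -[e]; exists e; rewrite orbC.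
Qed.

Lemma mem_componentsE (F : {set E}) (K : {set V}) y :
  K \in components F -> y \in K -> K = [set z | connect (adj F) y z].
Proof.
move=> /imsetP[x _ ->]; rewrite inE => cxy; apply/setP => z; rewrite !inE.
apply/idP/idP; last exact: connect_trans.
by apply: connect_trans; rewrite (sym_connect_sym (@adj_sym F)).
Qed.

Lemma components_edge (F : {set E}) (K : {set V}) e :
  K \in components F -> e \in F -> (src e \in K) = (tgt e \in K).
Proof.
move=> /imsetP[x _ ->] Fe; rewrite !inE.
have a : adj F (src e) (tgt e) by apply/existsP; exists e; rewrite Fe !eqxx.
apply/idP/idP => cx; apply: connect_trans cx _; apply: connect1 => //.
by rewrite adj_sym.
Qed.

Lemma sum_deg_component (A F : {set E}) (K : {set V}) :
  K \in components (compl A) -> F \subset compl A ->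
  \sum_(v in K) deg F v = 2 * #|[set e in F | src e \in K]|.
Proof.
move=> HK /subsetP sFA; rewrite sum_deg_set card_set_cond_sum big_distrr.
apply: eq_bigr => e _; case Fe: (e \in F) => //=.
by rewrite -(components_edge HK (sFA e Fe)) !mul1n addnn -mul2n.
Qed.

Lemma connect_loops (F : {set E}) (u y : V) :
  (forall e, e \in F -> 0 < ends_at e u -> src e = tgt e) ->
  connect (adj F) u y -> y = u.
Proof.
move=> loops; have cl : closed (adj F) (pred1 u).
  move=> x z /existsP[e /andP[Fe exz]].
  have ends_same : (src e == u) = (tgt e == u).
    have := loops e Fe; rewrite /ends_at.
    by do 2 case: eqP => //= ?; move=> /(_ isT); congruence.
  by case/orP: exz => /andP[/eqP <- /eqP <-]; rewrite !inE.
by move/(closed_connect cl); rewrite !inE eqxx => /esym/eqP.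
Qed.

Lemma cubic_bridgeless_loopfree :
  cubic src tgt -> bridgeless src tgt -> forall e, src e != tgt e.
Proof.
move=> cub br e; apply/negP => /eqP loop; set u := src e.
have : \sum_(f | f != e) ends_at f u == 1.
  move: (cub u); rewrite deg_sumE (bigD1 e) //= in_setT mul1n.
  have -> : ends_at e u = 2 by rewrite /ends_at -loop eqxx.
  under eq_bigr do rewrite in_setT mul1n.
  lia.
case/sum_nat_eq1 => f [fe f1 others].
have onlye g : g \in [set: E] :\ f -> 0 < ends_at g u -> src g = tgt g.
  rewrite !inE andbT => gf; case: (eqVneq g e) => [-> //|ge].
  by rewrite others.
have [x ux ux_conn] : exists2 x, x != u & connect (adj ([set: E] :\ f)) u x.
  have := br f; move: f1; rewrite /ends_at.
  case: eqP => [-> | su]; case: eqP => [-> | tu] //= _.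
  - by move=> c; exists (tgt f) => //; apply/eqP.
  - rewrite (sym_connect_sym (@adj_sym _)) => c.
    by exists (src f) => //; apply/eqP.
by move/eqP: ux; apply; apply: connect_loops onlye ux_conn.
Qed.

Lemma join_deg (J : {set E}) v :
  cubic src tgt -> is_join src tgt J -> deg J v = 1 \/ deg J v = 3.
Proof.
move=> cub isj; have := deg_subset v (subsetT J); have := isj v.
by rewrite cub; case: (deg J v) => [|[|[|[|n]]]] //= _ _; [left|right].
Qed.

Definition all_deg1 (A B C : {set E}) (v : V) : bool :=
  [&& deg A v == 1, deg B v == 1 & deg C v == 1].

Lemma card_not_all_deg1 (A B C : {set E}) :
  cubic src tgt ->
  is_join src tgt A -> is_join src tgt B -> is_join src tgt C ->
  #|[set v | ~~ all_deg1 A B C v]|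
    <= nJ src tgt A + nJ src tgt B + nJ src tgt C.
Proof.
move=> cub jA jB jC.
have sub : [set v | ~~ all_deg1 A B C v] \subset
    [set v | deg A v == 3] :|: [set v | deg B v == 3] :|: [set v | deg C v == 3].
  apply/subsetP => v; rewrite !inE /all_deg1.
  by case: (join_deg v cub jA) => ->; case: (join_deg v cub jB) => ->;
     case: (join_deg v cub jC) => ->.
apply: leq_trans (subset_leq_card sub) _; rewrite /nJ.
by apply: leq_trans (leq_card_setU _ _) _; rewrite leq_add2r leq_card_setU.
Qed.

Lemma Ei0_subset_compl (A B C : {set E}) : Ei A B C 0 \subset compl A.
Proof. by apply/subsetP => e; rewrite !inE; case: (e \in A). Qed.

Lemma deg_Ei0_all_deg1 (A B C : {set E}) v :
  cubic src tgt -> all_deg1 A B C v ->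
  deg (Ei A B C 0) v =
  deg (A :&: B) v + deg (A :&: C) v + deg ((B :&: C) :\: A) v.
Proof.
move=> cub /and3P[/eqP dA /eqP dB /eqP dC].
have : deg (Ei A B C 0) v + deg A v + deg B v + deg C v =
    deg [set: E] v + deg (A :&: B) v + deg (A :&: C) v + deg ((B :&: C) :\: A) v.
  rewrite !deg_sumE -!big_split; apply: eq_bigr => e _; rewrite !inE.
  by case: (e \in A); case: (e \in B); case: (e \in C) => /=; lia.
by rewrite cub dA dB dC; lia.
Qed.

(* e joins an end meeting a single edge of A :&: B to an end meeting a single
   edge of A :&: C, and neither end meets an edge of (B :&: C) :\: A. *)
Definition tight_end (A B C : {set E}) (v : V) : bool :=
  (deg (A :&: B) v + deg (A :&: C) v == 1) && (deg ((B :&: C) :\: A) v == 0).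

Definition tight (A B C : {set E}) (e : E) : bool :=
  [&& tight_end A B C (src e), tight_end A B C (tgt e)
    & deg (A :&: B) (src e) + deg (A :&: B) (tgt e) == 1].

Definition weight (A B C : {set E}) (e : E) : nat := 1 + tight A B C e.

Lemma tight_at_most_once (J1 J2 J3 : {set E}) e :
  tight J1 J2 J3 e + tight J2 J1 J3 e + tight J3 J1 J2 e <= 1.
Proof.
have split_triple v :
  [/\ deg (J1 :&: J2) v = deg ((J1 :&: J2) :\: J3) v + deg (J1 :&: J2 :&: J3) v,
      deg (J1 :&: J3) v = deg ((J1 :&: J3) :\: J2) v + deg (J1 :&: J2 :&: J3) v
    & deg (J2 :&: J3) v = deg ((J2 :&: J3) :\: J1) v + deg (J1 :&: J2 :&: J3) v].
  split; symmetry; apply: deg_add => f; rewrite !inE;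
  by case: (f \in J1); case: (f \in J2); case: (f \in J3).
case: (split_triple (src e)) (split_triple (tgt e)) => [? ? ?] [? ? ?].
by rewrite /tight /tight_end !(setIC J2 J1) !(setIC J3 J1) !(setIC J3 J2); lia.
Qed.

Lemma deg_ends_gt0 (F : {set E}) e :
  e \in F -> 0 < deg F (src e) /\ 0 < deg F (tgt e).
Proof.
move=> Fe; rewrite !deg_sumE.
by split; rewrite (bigD1 e) //= Fe mul1n /ends_at eqxx ?addn1.
Qed.

Section OddComponent.
Variables (A B C : {set E}) (K : {set V}).
Hypotheses (cubicG : cubic src tgt) (K_comp : K \in components (compl A)).
Hypotheses (K_odd : odd #|K|) (K_deg1 : forall v, v \in K -> all_deg1 A B C v).

(* Edges of Y \ A count twice in the sum, so its parity is that of #|K|. *)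
Lemma odd_sum_deg_setI (Y : {set E}) :
  (forall v, v \in K -> deg Y v = 1) -> odd (\sum_(v in K) deg (A :&: Y) v).
Proof.
move=> Y1; have sumY : \sum_(v in K) deg Y v = #|K|.
  by rewrite -sum1_card; apply: eq_bigr.
have YA : Y :\: A \subset compl A.
  by apply/subsetP => e; rewrite !inE => /andP[].
have : \sum_(v in K) deg Y v =
    \sum_(v in K) deg (A :&: Y) v + 2 * #|[set e in Y :\: A | src e \in K]|.
  rewrite -(sum_deg_component K_comp YA) -big_split; apply: eq_bigr => v _.
  symmetry; apply: deg_add => e; rewrite !inE.
  by case: (e \in A); case: (e \in Y).
by move=> splitY; move: K_odd; rewrite -sumY splitY oddD oddM addbF.
Qed.

Lemma odd_sum_deg_AB : odd (\sum_(v in K) deg (A :&: B) v).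
Proof. by apply: odd_sum_deg_setI => v /K_deg1 /and3P[_ /eqP]. Qed.

Lemma odd_sum_deg_AC : odd (\sum_(v in K) deg (A :&: C) v).
Proof. by apply: odd_sum_deg_setI => v /K_deg1 /and3P[_ _ /eqP]. Qed.

Lemma double_card_Ei0_component :
  2 * #|[set e in Ei A B C 0 | src e \in K]| =
  \sum_(v in K) deg (A :&: B) v + \sum_(v in K) deg (A :&: C) v
    + \sum_(v in K) deg ((B :&: C) :\: A) v.
Proof.
rewrite -(sum_deg_component K_comp (Ei0_subset_compl A B C)) -!big_split.
by apply: eq_bigr => v /K_deg1; apply: deg_Ei0_all_deg1.
Qed.

Lemma single_Ei0_tight e0 : src e0 != tgt e0 ->
  [set e in Ei A B C 0 | src e \in K] = [set e0] -> tight A B C e0.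
Proof.
move=> e0_nl X1; have : e0 \in [set e0] by rewrite set11.
rewrite -X1 inE => /andP[e0E0 srcK].
have tgtK : tgt e0 \in K.
  have e0A := subsetP (Ei0_subset_compl A B C) _ e0E0.
  by rewrite -(components_edge K_comp e0A).
have sums := double_card_Ei0_component; rewrite X1 cards1 in sums.
have odd_le2 n : odd n -> n <= 2 -> n = 1 by case: n => [|[|[|]]].
have sAB := odd_le2 _ odd_sum_deg_AB ltac:(lia).
have sAC := odd_le2 _ odd_sum_deg_AC ltac:(lia).
have pair F := leq_sum_pair (fun v => deg F v) srcK tgtK e0_nl.
have := pair (A :&: B); have := pair (A :&: C); have := pair ((B :&: C) :\: A).
have := deg_Ei0_all_deg1 cubicG (K_deg1 srcK).
have := deg_Ei0_all_deg1 cubicG (K_deg1 tgtK).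
have [] := deg_ends_gt0 e0E0.
rewrite /tight /tight_end; lia.
Qed.

Lemma weight_component_ge2 : (forall e, src e != tgt e) ->
  2 <= \sum_(e in [set e in Ei A B C 0 | src e \in K]) weight A B C e.
Proof.
move=> loopfree; have sums := double_card_Ei0_component.
have oAB := odd_sum_deg_AB.
case: (ltngtP #|[set e in Ei A B C 0 | src e \in K]| 1) => [lt1 | gt1 | ].
- have AB0 : \sum_(v in K) deg (A :&: B) v = 0 by lia.
  by rewrite AB0 in oAB.
- apply: leq_trans gt1 _; rewrite -sum1_card.
  by apply: leq_sum => e _; rewrite /weight leq_addr.
- move/eqP/cards1P => [e0 X1].
  by rewrite X1 big_set1 /weight single_Ei0_tight.
Qed.

End OddComponent.

Lemma weight_sum_ge (A B C : {set E}) :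
  cubic src tgt -> (forall e, src e != tgt e) ->
  2 * #|[set K in components (compl A) |
           odd #|K| && [forall v in K, all_deg1 A B C v]]|
  <= \sum_(e in Ei A B C 0) weight A B C e.
Proof.
move=> cub loopfree; set P := [set K in _ | _].
apply: (@leq_trans (\sum_(K in P)
    \sum_(e in [set e in Ei A B C 0 | src e \in K]) weight A B C e)).
  rewrite mulnC -sum_nat_const; apply: leq_sum => K.
  rewrite inE => /and3P[K_comp K_odd /forall_inP K_deg1].
  exact: weight_component_ge2.
under eq_bigr => K _ do rewrite big_mkcond.
rewrite exchange_big [X in _ <= X]big_mkcond /=; apply: leq_sum => e _.
under eq_bigr => K _ do rewrite inE.
case: (e \in Ei A B C 0) => /=; last by rewrite big1.
set Ke := [set z | connect (adj (compl A)) (src e) z].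
apply: (@leq_trans (\sum_K (if K == Ke then weight A B C e else 0))).
  rewrite big_mkcond /=; apply: leq_sum => K _.
  case PK: (K \in P) => //; case sK: (src e \in K) => //.
  by move: PK; rewrite inE => /andP[/mem_componentsE/(_ sK) ->]; rewrite eqxx.
by rewrite -big_mkcond big_pred1_eq.
Qed.

Lemma odd_comps_split (A B C : {set E}) :
  odd_comps src tgt (compl A) <= #|[set v | ~~ all_deg1 A B C v]| +
    #|[set K in components (compl A) |
         odd #|K| && [forall v in K, all_deg1 A B C v]]|.
Proof.
set JV := [set v | _].
rewrite /odd_comps -(cardsID [set K : {set V} | [exists v in K, v \in JV]]).
apply: leq_add.
- set comp_of := fun v => [set z | connect (adj (compl A)) v z].
  apply: leq_trans (leq_imset_card comp_of JV).
  apply: subset_leq_card; apply/subsetP => K.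
  rewrite !inE => /andP[/andP[K_comp _] /exists_inP[v vK vJ]].
  by apply/imsetP; exists v => //; exact: mem_componentsE K_comp vK.
- apply: subset_leq_card; apply/subsetP => K.
  rewrite !inE => /andP[noJV /andP[-> ->]] /=; apply/forall_inP => v vK.
  by apply: contraNT noJV => v1; apply/exists_inP; exists v; rewrite // inE.
Qed.

Lemma odd_comps_compl_le (A B C : {set E}) :
  cubic src tgt -> (forall e, src e != tgt e) ->
  2 * odd_comps src tgt (compl A) <=
  2 * #|[set v | ~~ all_deg1 A B C v]| + \sum_(e in Ei A B C 0) weight A B C e.
Proof.
move=> cub loopfree; have := odd_comps_split A B C.
have := weight_sum_ge A B C cub loopfree; lia.
Qed.

Lemma all_deg1_perm (A B C : {set E}) :
  [set v | ~~ all_deg1 B A C v] = [set v | ~~ all_deg1 A B C v] /\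
  [set v | ~~ all_deg1 C A B v] = [set v | ~~ all_deg1 A B C v].
Proof.
by split; apply/setP => v; rewrite !inE /all_deg1;
   case: (deg A v == 1); case: (deg B v == 1); case: (deg C v == 1).
Qed.

Lemma Ei_perm (A B C : {set E}) i :
  Ei B A C i = Ei A B C i /\ Ei C A B i = Ei A B C i.
Proof.
by split; apply/setP => e; rewrite !inE;
   case: (e \in A); case: (e \in B); case: (e \in C).
Qed.

Lemma weight_sum3_le (J1 J2 J3 : {set E}) (S : {set E}) :
  \sum_(e in S) weight J1 J2 J3 e + \sum_(e in S) weight J2 J1 J3 e
    + \sum_(e in S) weight J3 J1 J2 e <= 4 * #|S|.
Proof.
rewrite -!big_split /= mulnC -sum_nat_const; apply: leq_sum => e _.
by have := tight_at_most_once J1 J2 J3 e; rewrite /weight; lia.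
Qed.

End JoinComplements.

Theorem theorem2p3 (V E : finType) (src tgt : E -> V)
    (J1 J2 J3 : {set E}) :
  cubic src tgt -> bridgeless src tgt ->
  is_join src tgt J1 -> is_join src tgt J2 -> is_join src tgt J3 ->
  odd_comps src tgt (compl J1) + odd_comps src tgt (compl J2)
    + odd_comps src tgt (compl J3)
  <= 2 * #|Ei J1 J2 J3 0|
     + 3 * (nJ src tgt J1 + nJ src tgt J2 + nJ src tgt J3).
Proof.
move=> cub br j1 j2 j3; have loopfree := cubic_bridgeless_loopfree cub br.
have := card_not_all_deg1 cub j1 j2 j3.
have := weight_sum3_le src tgt J1 J2 J3 (Ei J1 J2 J3 0).
have := odd_comps_compl_le J1 J2 J3 cub loopfree.
have := odd_comps_compl_le J2 J1 J3 cub loopfree.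
have := odd_comps_compl_le J3 J1 J2 cub loopfree.
have [-> ->] := all_deg1_perm src tgt J1 J2 J3.
have [-> ->] := Ei_perm J1 J2 J3 0.
lia.
Qed.
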